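(* Let $k,l,m,n$ be positive integers with $k^n\equiv 1\pmod m$ and $l(k-1)\equiv0\pmod m$, let $G=\langle a,b;\ a^m=1,\ b^n=a^l,\ b^{-1}ab=a^k\rangle$, and let $R=\{k^j-1 \bmod m: j\in\mathbb{Z}_n\}$ and $L=\{1-k^j \bmod m: j\in\mathbb{Z}_n\}$. Then (i) $0\in R$ and $0\in L$; and (ii) if $n=\mathrm{ind}_m(k)$, the following are equivalent: (a) the centre of $G$ is trivial; (b) $R$ contains an element invertible in $\mathbb{Z}_m$; (c) $L$ contains an element invertible in $\mathbb{Z}_m$.
   Context: $\mathrm{ind}_m(k)$ is the least positive integer $d$ with $k^d\equiv 1\pmod m$. *)

From HB Require Import structures.
From mathcomp Require Import all_boot all_order all_algebra all_fingroup all_solvable.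
Set Implicit Arguments. Unset Strict Implicit. Unset Printing Implicit Defensive.
Import GRing.Theory Num.Theory.

Definition is_ind (m k n : nat) : Prop :=
  [/\ 0 < n, k ^ n = 1 %[mod m]
    & forall d, 0 < d -> k ^ d = 1 %[mod m] -> n <= d]%N.

(* R = { k^j - 1 mod m : j in Z_n },  L = { 1 - k^j mod m : j in Z_n },
   represented as residues in [0, m) (as integers); j ranges over 0..n-1. *)
Definition Rset (k m n : nat) : seq int :=
  [seq (((k%:Z ^+ j - 1) %% m%:Z)%Z)%R | j <- iota 0 n].
Definition Lset (k m n : nat) : seq int :=
  [seq (((1 - k%:Z ^+ j) %% m%:Z)%Z)%R | j <- iota 0 n].

Definition unit_mod (m : nat) (r : int) : bool := coprimez r m%:Z.

From mathcomp Require Import all_boot all_order all_algebra all_fingroup all_solvable.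
From mathcomp Require Import zify.
Import GRing.Theory Num.Theory.

(* Conjugation by b acts on <a> as x |-> x ^+ k.  Hence a ^+ i * b ^+ j is
   central iff b ^+ j centralises a and a ^+ i commutes with b, i.e.
   k ^ j = 1 and i * (k - 1) = 0 modulo #[a].  When gcd (k - 1, #[a]) = 1,
   the element b ^+ n of <a> is therefore trivial, and minimality of n kills
   b ^+ j; when the gcd g exceeds 1, a ^+ (#[a] %/ g) is a nontrivial central
   element.  A permutation model on n * m points shows #[a] = m, since
   |G| <= #[a] * n.  Finally R and L consist of the residues of
   +-(k ^ j - 1), all multiples of k - 1, and R contains the residue of
   k - 1 itself. *)

Lemma mem0_Rset k m n : (0 < n)%N -> 0%R \in Rset k m n.
Proof.
by move=> n_gt0; apply/mapP; exists 0%N; rewrite ?mem_iota // expr0 subrr mod0z.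
Qed.

Lemma mem0_Lset k m n : (0 < n)%N -> 0%R \in Lset k m n.
Proof.
by move=> n_gt0; apply/mapP; exists 0%N; rewrite ?mem_iota // expr0 subrr mod0z.
Qed.

Lemma unit_mod_modz m x : unit_mod m (x %% m%:Z)%Z = unit_mod m x.
Proof. by rewrite /unit_mod /coprimez gcdz_modl. Qed.

Lemma unit_mod_nat m x : unit_mod m x%:Z = coprime x m.
Proof. by rewrite /unit_mod coprimezE !absz_nat. Qed.

Lemma has_unit_Lset k m n :
  has (unit_mod m) (Lset k m n) = has (unit_mod m) (Rset k m n).
Proof.
rewrite !has_map; apply: eq_has => j /=.
by rewrite !unit_mod_modz -opprB /unit_mod coprimeNz.
Qed.

Lemma subn1_dvd_expn k j : (0 < k)%N -> (k - 1 %| k ^ j - 1)%N.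
Proof.
move=> k_gt0; rewrite -eqn_mod_dvd ?expn_gt0 ?k_gt0 //.
have ek : k = 1 + (k - 1) by rewrite addnC subnK.
by rewrite -modnXm {1}ek modnDr modnXm exp1n.
Qed.

Lemma expn_modn k m n j : k ^ n = 1 %[mod m] -> k ^ (j %% n) = k ^ j %[mod m].
Proof.
move=> kn1; rewrite [in RHS](divn_eq j n) expnD [_ * n]mulnC expnM -modnMml.
by rewrite -[(k ^ n) ^ _ %% m]modnXm kn1 modnXm exp1n modnMml mul1n.
Qed.

Lemma has_unit_Rset k m n : (0 < k)%N -> (0 < n)%N -> k ^ n = 1 %[mod m] ->
  has (unit_mod m) (Rset k m n) = coprime (k - 1) m.
Proof.
move=> k_gt0 n_gt0 kn1.
have entryE j : unit_mod m ((k%:Z ^+ j - 1) %% m%:Z)%Z = coprime (k ^ j - 1) m.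
  by rewrite unit_mod_modz -!natz -natrX natz subzn ?expn_gt0 ?k_gt0 // unit_mod_nat.
rewrite has_map (eq_has entryE); apply/hasP/idP => [[j _] | cop_k].
  exact/coprime_dvdl/subn1_dvd_expn.
exists (1 %% n); first by rewrite mem_iota ltn_pmod.
suff e : k ^ (1 %% n) - 1 = k - 1 %[mod m] by rewrite -coprime_modl e coprime_modl.
apply/eqP; rewrite -(eqn_modDr 1) !subnK ?expn_gt0 ?k_gt0 //.
by rewrite expn_modn ?expn1.
Qed.

Section CycleJoin.
Local Open Scope group_scope.
Context {gT : finGroupType} {a b : gT} {k : nat}.
Hypotheses (k_gt0 : (0 < k)%N) (conj_ab : a ^ b = a ^+ k).

Local Notation G := (<[a]> <*> <[b]>).

Lemma conj_cycle_norm : <[b]> \subset 'N(<[a]>).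
Proof. by rewrite cycle_subG inE -cycleJ conj_ab cycle_subG mem_cycle. Qed.

Lemma card_join_cycles_le n :
  (0 < n)%N -> b ^+ n \in <[a]> -> (#|G| <= #[a] * n)%N.
Proof.
move=> n_gt0 bn_a; rewrite norm_joinEr ?conj_cycle_norm //.
have meet_gt0 := cardG_gt0 (<[a]> :&: <[b]>)%G.
have ob : (#[b] <= n * #|<[a]> :&: <[b]>|)%N.
  rewrite -(divnK (dvdn_gcdl #[b] n)) -orderXgcd mulnC.
  apply: leq_mul; first exact: dvdn_leq n_gt0 (dvdn_gcdr _ _).
  by rewrite subset_leq_card // subsetI !cycle_subG bn_a mem_cycle.
rewrite -(leq_pmul2r meet_gt0) -mul_cardG -mulnA leq_mul2l.
by apply/orP; right.
Qed.

Lemma conjg_expX j : a ^ (b ^+ j) = a ^+ (k ^ j).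
Proof.
elim: j => [|j IH]; first by rewrite conjg1 expn0 expg1.
by rewrite expgSr conjgM IH conjXg conj_ab -expgM expnS mulnC.
Qed.

Lemma cycle_cent_coprime i :
  coprime (k - 1) #[a] -> commute (a ^+ i) b -> a ^+ i = 1.
Proof.
rewrite coprime_sym => cop_k ai_b.
apply/eqP; rewrite -order_dvdn -(Gauss_dvdr _ cop_k).
have : a ^+ i ^ b = a ^+ i by rewrite conjgE ai_b mulKg.
rewrite conjXg conj_ab -expgM -{2}[a]expg1 -expgM => /eqP.
by rewrite eq_expg_mod_order mul1n eqn_mod_dvd ?leq_pmull // mulnBl mul1n.
Qed.

Lemma center_join_cycles_nontrivial : ~~ coprime (k - 1) #[a] -> 'Z(G) != 1.
Proof.
move=> ncop; set g := gcdn (k - 1) #[a].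
have g_gt1 : (1 < g)%N by rewrite ltn_neqAle eq_sym ncop gcdn_gt0 order_gt0 orbT.
have ga : g %| #[a] := dvdn_gcdr _ _.
set c := a ^+ (#[a] %/ g).
have c_b : commute c b.
  rewrite /commute conjgC; congr (_ * _).
  rewrite /c conjXg conj_ab -expgM; apply/eqP; rewrite eq_expg_mod_order.
  rewrite -[k in (k * _)%N](subnK k_gt0) mulnDl mul1n -modnDml.
  by rewrite -(divnK (dvdn_gcdl (k - 1) #[a])) -/g -mulnA (mulnC g) divnK // modnMl.
have cZ : c \in 'Z(G).
  apply/centerP; split; first by rewrite groupX // mem_gen // inE cycle_id.
  suff: G \subset 'C[c] by move/subsetP=> sub y /sub /cent1P.
  rewrite join_subG !cycle_subG; apply/andP; split; apply/cent1P.
    exact: commuteX.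
  exact: commute_sym c_b.
apply/trivgPn; exists c; first exact: cZ.
apply/eqP => c1.
have q_gt0 : (0 < #[a] %/ g)%N.
  rewrite divn_gt0; last exact: ltnW.
  exact: dvdn_leq (order_gt0 a) ga.
have := ltn_Pdiv g_gt1 (order_gt0 a); rewrite ltnNge => /negP; apply.
by apply: dvdn_leq q_gt0 _; rewrite order_dvdn -/c c1.
Qed.

Lemma center_join_cycles_trivial n :
  (0 < n)%N -> coprime (k - 1) #[a] -> b ^+ n \in <[a]> ->
  (forall d, 0 < d -> k ^ d = 1 %[mod #[a]] -> n <= d)%N -> 'Z(G) = 1.
Proof.
move=> n_gt0 cop_k bn_a min_n.
have aG : a \in G by rewrite (subsetP (joing_subl _ _)) ?cycle_id.
have bG : b \in G by rewrite (subsetP (joing_subr _ _)) ?cycle_id.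
have bn1 : b ^+ n = 1.
  case/cycleP: bn_a => i bn; rewrite bn; apply: (cycle_cent_coprime _ cop_k).
  by rewrite -bn; apply/commute_sym/commuteX.
apply/trivgP/subsetP => z /centerP[zG zC]; move: zG.
rewrite /= norm_joinEr ?conj_cycle_norm //.
case/mulsgP=> _ _ /cycleP[i ->] /cycleP[j ->] zE; subst z; rewrite inE.
have bj1 : b ^+ j = 1.
  have : a ^ (b ^+ j) = a.
    have az : a ^ (a ^+ i * b ^+ j) = a by rewrite conjgE -(zC a aG) mulKg.
    have aai : a ^ (a ^+ i) = a by rewrite conjgE -expgS expgSr mulKg.
    by rewrite -[RHS]az conjgM aai.
  rewrite -(expg_mod j bn1) conjg_expX -{2}[a]expg1 => /eqP.
  rewrite eq_expg_mod_order => /eqP kj; have lt_j := ltn_pmod j n_gt0.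
  case: (posnP (j %% n)) => [-> | j_gt0]; first exact: expg0.
  by have := min_n _ j_gt0 kj; rewrite leqNgt lt_j.
rewrite bj1 mulg1; apply/eqP; apply: (cycle_cent_coprime _ cop_k).
by have := zC b bG; rewrite bj1 mulg1.
Qed.

Lemma center_join_cyclesP n :
  (0 < n)%N -> b ^+ n \in <[a]> ->
  (forall d, 0 < d -> k ^ d = 1 %[mod #[a]] -> n <= d)%N ->
  'Z(G) = 1 <-> coprime (k - 1) #[a].
Proof.
move=> n_gt0 bn_a min_n; split=> [Z1 | cop_k].
  by apply: contraTT (center_join_cycles_nontrivial) _; rewrite Z1.
exact: center_join_cycles_trivial n_gt0 cop_k bn_a min_n.
Qed.

End CycleJoin.

Section RegularModel.
Context {m n k l : nat}.
Hypotheses (m_gt0 : 0 < m) (n_gt0 : 0 < n) (k_gt0 : 0 < k).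
Hypotheses (kn1 : k ^ n = 1 %[mod m]) (lk0 : l * (k - 1) = 0 %[mod m]).

(* The pair (j, i) stands for b ^+ j * a ^+ i, on which a and b act by right
   multiplication; b ^+ n = a ^+ l is used when j wraps around. *)
Local Notation X := ('I_n * 'I_m)%type.

Definition point (j i : nat) : X :=
  (Ordinal (ltn_pmod j n_gt0), Ordinal (ltn_pmod i m_gt0)).

Lemma eq_point j i j' i' :
  j = j' %[mod n] -> i = i' %[mod m] -> point j i = point j' i'.
Proof. by move=> ej ei; congr pair; apply: val_inj; rewrite /= ?ej ?ei. Qed.

Lemma point_inj j i j' i' :
  point j i = point j' i' -> j = j' %[mod n] /\ i = i' %[mod m].
Proof. by case. Qed.

Lemma pointE (x : X) : point x.1 x.2 = x.
Proof. by case: x => j i; congr pair; apply: val_inj; rewrite /= modn_small. Qed.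

Lemma mulk_modn_inj i i' : i * k = i' * k %[mod m] -> i = i' %[mod m].
Proof.
have kn j : j = j * k ^ n %[mod m] by rewrite -modnMmr kn1 modnMmr muln1.
move=> e; rewrite kn [in RHS]kn -(prednK n_gt0) expnS !mulnA.
by rewrite -modnMml e modnMml.
Qed.

Lemma mul_l_expk j : l * k ^ j = l %[mod m].
Proof.
have lk : l * k = l %[mod m].
  by rewrite -[k](subnK k_gt0) mulnDr muln1 -modnDml lk0 mod0n.
elim: j => [|j IH]; first by rewrite muln1.
by rewrite expnS mulnCA -modnMmr IH modnMmr mulnC.
Qed.

Definition act_a (x : X) : X := point x.1 (x.2 + 1).
Definition act_b (x : X) : X := point x.1.+1 (x.2 * k + (x.1.+1 == n) * l).

Lemma act_a_inj : injective act_a.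
Proof.
move=> x y /point_inj[e1 /eqP e2]; rewrite -[x]pointE -[y]pointE.
by apply: eq_point => //; apply/eqP; rewrite eqn_modDr in e2.
Qed.

Lemma act_b_inj : injective act_b.
Proof.
move=> x y /point_inj[/eqP e1 /eqP e2].
have e : x.1 = y.1.
  apply: val_inj; move: e1; rewrite -[x.1.+1]addn1 -[y.1.+1]addn1.
  by rewrite eqn_modDr !modn_small ?ltn_ord // => /eqP.
rewrite -[x]pointE -[y]pointE; apply: eq_point; first by rewrite e.
by apply/mulk_modn_inj/eqP; rewrite e eqn_modDr in e2.
Qed.

Definition perm_a : {perm X} := perm act_a_inj.
Definition perm_b : {perm X} := perm act_b_inj.

Local Open Scope group_scope.

Lemma perm_aX t (x : X) : (perm_a ^+ t) x = point x.1 (x.2 + t).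
Proof.
elim: t => [|t IH]; first by rewrite expg0 perm1 addn0 pointE.
rewrite expgSr permM IH permE /act_a /=.
by apply: eq_point; rewrite ?modn_mod // modnDml addn1 addnS.
Qed.

Lemma perm_bX t (x : X) :
  x.1 + t < n -> (perm_b ^+ t) x = point (x.1 + t) (x.2 * k ^ t).
Proof.
elim: t => [|t IH] lt_t; first by rewrite expg0 perm1 addn0 muln1 pointE.
rewrite expgSr permM IH ?(ltn_trans _ lt_t) ?ltn_add2l // permE /act_b /=.
rewrite modn_small ?(ltn_trans _ lt_t) ?ltn_add2l // -addnS.
rewrite ltn_eqF // mul0n addn0; apply: eq_point => //.
by rewrite modnMml expnSr mulnA.
Qed.

Lemma perm_bn : perm_b ^+ n = perm_a ^+ l.
Proof.
apply/permP => x; have lt_x1 := ltn_ord x.1.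
have [t def_n] : exists t, n = t.+1 + x.1 by exists (n - x.1.+1); lia.
have wrap : (x.1 + t).+1 = n by lia.
have -> : perm_b ^+ n = perm_b ^+ t * perm_b * perm_b ^+ x.1.
  by rewrite -expgSr -expgD -def_n.
rewrite !permM (perm_bX t); last by rewrite wrap.
rewrite permE /act_b /= modn_small ?wrap ?eqxx ?mul1n //.
rewrite perm_bX /= modnn // perm_aX; apply: eq_point => //=.
rewrite modnMml mulnDl -mulnA -modnDml modnMml modnDml.
rewrite -mulnA -expnS -expnD addnS (addnC t) wrap.
by rewrite -modnDmr mul_l_expk modnDmr -modnDml -modnMmr kn1 modnMmr muln1 modnDml.
Qed.

Lemma perm_am : perm_a ^+ m = 1.
Proof.
apply/permP => x; rewrite perm_aX perm1 -[RHS]pointE.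
by apply: eq_point; rewrite ?modnDr.
Qed.

Lemma perm_conj : perm_a ^ perm_b = perm_a ^+ k.
Proof.
suff: perm_a * perm_b = perm_b * perm_a ^+ k by rewrite conjgE => ->; rewrite mulKg.
apply/permP => x; rewrite !permM perm_aX !permE /act_a /act_b /=.
rewrite (modn_small (ltn_ord x.1)); apply: eq_point.
  by rewrite modn_mod.
by rewrite -modnDml modnMml modnDml modnDml mulnDl mul1n addnAC.
Qed.

Definition model := <[perm_a]> <*> <[perm_b]>.

Lemma model_homGrp :
  model \homg Grp (a : b : (a ^+ m = 1, b ^+ n = a ^+ l, a ^ b = a ^+ k)).
Proof.
apply/existsP; exists (perm_a, perm_b).
by rewrite /= !xpair_eqE /= perm_am perm_bn perm_conj !eqxx.
Qed.

Lemma card_model : (n * m <= #|model|)%N.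
Proof.
have onto : [set: X] \subset [set g (point 0 0) | g : {perm X} in model].
  apply/subsetP => x _; apply/imsetP; exists (perm_b ^+ x.1 * perm_a ^+ x.2).
    by rewrite groupM ?groupX // mem_gen // inE cycle_id ?orbT.
  rewrite permM perm_aX perm_bX /= !mod0n ?mul0n ?mod0n ?add0n // -[LHS]pointE.
  by apply: eq_point; rewrite ?modn_mod.
have := subset_leq_card onto; rewrite cardsT card_prod !card_ord => /leq_trans.
by apply; apply: leq_imset_card.
Qed.

End RegularModel.

Lemma order_gen_isoGrp {gT : finGroupType} {G : {group gT}} {a b : gT}
    {k l m n : nat} :
  (0 < k)%N -> (0 < m)%N -> (0 < n)%N ->
  k ^ n = 1 %[mod m] -> l * (k - 1) = 0 %[mod m] ->
  (G \isog Grp (a : b : (a ^+ m = 1, b ^+ n = a ^+ l, a ^ b = a ^+ k)))%g ->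
  (<[a]> <*> <[b]> = G)%g ->
  (a ^+ m = 1)%g -> (b ^+ n = a ^+ l)%g -> (a ^ b = a ^+ k)%g ->
  #[a]%g = m.
Proof.
move=> k_gt0 m_gt0 n_gt0 kn1 lk0 isoG defG am bn ab.
have model_hom := model_homGrp m_gt0 n_gt0 k_gt0 kn1 lk0.
rewrite -isoG in model_hom.
have le_nm := leq_trans (card_model (l := l) m_gt0 n_gt0 kn1) (leq_homg model_hom).
have bn_a : (b ^+ n \in <[a]>)%g by rewrite bn mem_cycle.
have := card_join_cycles_le ab _ n_gt0 bn_a; rewrite defG => /(leq_trans le_nm).
rewrite mulnC leq_pmul2r // => le_ma.
by apply/eqP; rewrite eqn_leq le_ma andbT dvdn_leq // order_dvdn am.
Qed.

Theorem lemma2p4 (k l m n : nat) (gT : finGroupType) (G : {group gT}) :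
  (0 < k)%N -> (0 < l)%N -> (0 < m)%N -> (0 < n)%N ->
  k ^ n = 1 %[mod m] -> l * (k - 1) = 0 %[mod m] ->
  (G \isog Grp (a : b : (a ^+ m = 1, b ^+ n = a ^+ l, a ^ b = a ^+ k)))%g ->
  ((0%R \in Rset k m n) /\ (0%R \in Lset k m n)) /\
  (is_ind m k n ->
     ((('Z(G))%g = 1%g :> {set gT}) <-> has (unit_mod m) (Rset k m n)) /\
     (has (unit_mod m) (Rset k m n) <-> has (unit_mod m) (Lset k m n))).
Proof.
move=> k_gt0 _ m_gt0 n_gt0 kn1 lk0 isoG.
split; first by split; [apply: mem0_Rset | apply: mem0_Lset].
case=> _ _ min_n; rewrite has_unit_Lset has_unit_Rset //; split=> //.
have /existsP[[a b]] := isoGrp_hom isoG.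
rewrite /= !xpair_eqE => /and4P[/eqP defG /eqP am /eqP bn /eqP ab].
have oa := order_gen_isoGrp k_gt0 m_gt0 n_gt0 kn1 lk0 isoG defG am bn ab.
rewrite -defG -oa; apply: (center_join_cyclesP k_gt0 ab _ n_gt0).
  by rewrite bn mem_cycle.
by rewrite oa.
Qed.
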